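(* Fix $\epsilon,\phi\in\mathbb R$ with $|\epsilon|>1$ and $\phi\ne\epsilon$. For each $n$, let $(\mu_n,\mathbf x_n)$ be an eigenpair of $T_{n,\epsilon,\phi}$ with $\|\mathbf x_n\|_2=1$, and suppose $\mu_n\to\epsilon+\epsilon^{-1}$ as $n\to\infty$. Then: 1. Eventually, $\mu_n$ is an outlier of $T_{n,\epsilon,\phi}$, and there is a constant $c>0$ independent of $n$ such that eventually every eigenvalue $\lambda_n\ne\mu_n$ of $T_{n,\epsilon,\phi}$ satisfies $|\lambda_n-(\epsilon+\epsilon^{-1})|\ge c$. 2. $\|\mathbf x_n-P_{\mathbf v_n}\mathbf x_n\|_2\to0$ as $n\to\infty$, where $\mathbf v_n=[1,\epsilon^{-1},\ldots,\epsilon^{-n+1}]^\top$.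
   Context: For $n\ge2$ and real parameters $\epsilon,\phi$, $T_{n,\epsilon,\phi}$ is the real symmetric tridiagonal $n\times n$ matrix with diagonal entries $(\epsilon,0,\ldots,0,\phi)$ and all sub- and super-diagonal entries equal to $1$. An outlier is an eigenvalue not in $[-2,2]$. For $\mathbf u\in\mathbb R^n\setminus\{0\}$, $P_{\mathbf u}$ denotes the orthogonal projector onto $\mathrm{span}\{\mathbf u\}$: $P_{\mathbf u}\mathbf x=\frac{\mathbf x^\top\mathbf u}{\mathbf u^\top\mathbf u}\mathbf u$. *)

From HB Require Import structures.
From mathcomp Require Import all_boot all_order all_algebra.
From mathcomp Require Import all_classical all_reals all_analysis.
Set Implicit Arguments. Unset Strict Implicit. Unset Printing Implicit Defensive.
Import Order.TTheory GRing.Theory Num.Theory.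
Local Open Scope ring_scope.

(* T_{n,eps,phi}: symmetric tridiagonal, diagonal (eps,0,...,0,phi),
   off-diagonals 1.  (Meaningful for n >= 2.) *)
Definition Tmat (R : realType) (n : nat) (eps phi : R) : 'M[R]_n :=
  \matrix_(i < n, j < n)
    if i == j then
      (if (i : nat) == 0%N then eps else if (i : nat) == n.-1 then phi else 0)
    else if ((i.+1 == j) || (j.+1 == i))%N then 1 else 0.

Definition norm2 (R : realType) (n : nat) (x : 'cV[R]_n) : R :=
  Num.sqrt (\sum_(i < n) (x i 0) ^+ 2).

Definition projl (R : realType) (n : nat) (u x : 'cV[R]_n) : 'cV[R]_n :=
  (((x^T *m u) 0 0) / ((u^T *m u) 0 0)) *: u.

Definition vvec (R : realType) (n : nat) (eps : R) : 'cV[R]_n :=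
  \col_(i < n) eps ^- i.

Definition outlier (R : realType) (n : nat) (A : 'M[R]_n) (l : R) : Prop :=
  eigenvalue A l /\ 2 < `|l|.

From HB Require Import structures.
From mathcomp Require Import all_boot all_order all_algebra.
From mathcomp Require Import all_classical all_reals all_analysis.
From mathcomp Require Import ring lra.
Import Order.TTheory GRing.Theory Num.Theory.
Local Open Scope classical_set_scope.
Local Open Scope ring_scope.
Set Implicit Arguments. Unset Strict Implicit.

(* Write q = 1/eps, r = |q| < 1 and theta = eps + q.  An eigenvector f of T for
   lam solves lam f_k = f_(k-1) + f_(k+1), with boundary rows at both ends.  If
   |lam - theta| <= tau and r^(n-1) <= tau, three energy estimates show that f
   is, up to O(tau), the geometric profile f_0 q^k (section EigenvectorProfile):
   the forward differences f_(k+1) - eps f_k are r^k O(1) + O(tau), which makes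
   the last entry O(tau); then the backward differences f_(k+1) - q f_k have
   energy O(tau^2); finally d_k = f_k - f_0 q^k, which obeys
   d_(k+1) = q d_k + (f_(k+1) - q f_k), has energy <= K tau^2 with K
   independent of n.  The theorem then follows by elementary linear algebra:
   theta lies outside [-2, 2] and mu_n -> theta; two orthonormal eigenvectors
   of the symmetric T cannot both lie close to the line spanned by v_n, which
   rules out a second eigenvalue near theta; and the orthogonal projection onto
   span{v_n} is the best approximation from that line. *)

Lemma sqr_contract (R : realFieldType) (q r u w : R) :
  `|q| = r -> 0 < r -> r < 1 -> (q * u + w) ^+ 2 <= r * u ^+ 2 + w ^+ 2 / (1 - r).
Proof.
move=> qr r_gt0 r_lt1; have r1 : 0 < 1 - r by lra.
rewrite -(ler_pM2r r1) mulrDl divfK ?gt_eqF //.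
have [->|->] : q = r \/ q = - r.
  by case: (ger0P q) qr => _ <-; [left | right; rewrite opprK].
- by have := sqr_ge0 ((1 - r) * u - w); have := sqr_ge0 u; nra.
- by have := sqr_ge0 ((1 - r) * u + w); have := sqr_ge0 u; nra.
Qed.

Lemma geometric_bound (R : realFieldType) (b : nat -> R) (r c : R) (N : nat) :
  0 <= r -> r < 1 -> 0 <= c ->
  (forall k, (k.+1 < N)%N -> `|b k.+1| <= r * `|b k| + c) ->
  forall k, (k < N)%N -> `|b k| <= r ^+ k * `|b 0%N| + c / (1 - r).
Proof.
move=> r_ge0 r_lt1 c_ge0 step; elim=> [|k IH] kN.
  by rewrite expr0 mul1r lerDl divr_ge0 // subr_ge0 ltW.
apply: le_trans (step k kN) _.
have -> : r ^+ k.+1 * `|b 0%N| + c / (1 - r) =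
          r * (r ^+ k * `|b 0%N| + c / (1 - r)) + c.
  by rewrite exprS; field; rewrite subr_eq0 gt_eqF.
by rewrite lerD2r ler_wpM2l // IH // ltnW.
Qed.

Lemma sum_sqr_shift (R : realFieldType) (a : nat -> R) (N : nat) :
  \sum_(k < N) a k.+1 ^+ 2 + a 0%N ^+ 2 = \sum_(k < N) a k ^+ 2 + a N ^+ 2.
Proof.
by rewrite addrC -(big_ord_recl N (fun k => a k ^+ 2)) (big_ord_recr N (fun k => a k ^+ 2)).
Qed.

Lemma backward_energy (R : realFieldType) (a c : nat -> R) (r : R) (N : nat) :
  0 <= r -> (forall k, (k < N)%N -> a k ^+ 2 <= r * a k.+1 ^+ 2 + c k) ->
  (1 - r) * \sum_(k < N) a k ^+ 2 <= r * a N ^+ 2 + \sum_(k < N) c k.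
Proof.
move=> r_ge0 step; have := sum_sqr_shift a N.
have : \sum_(k < N) a k ^+ 2 <= r * \sum_(k < N) a k.+1 ^+ 2 + \sum_(k < N) c k.
  by rewrite mulr_sumr -big_split; apply: ler_sum => k _; exact: step.
have := mulr_ge0 r_ge0 (sqr_ge0 (a 0%N)); nra.
Qed.

Lemma forward_energy (R : realFieldType) (a c : nat -> R) (r : R) (N : nat) :
  0 <= r -> (forall k, (k < N)%N -> a k.+1 ^+ 2 <= r * a k ^+ 2 + c k) ->
  (1 - r) * \sum_(k < N) a k.+1 ^+ 2 <= r * a 0%N ^+ 2 + \sum_(k < N) c k.
Proof.
move=> r_ge0 step; have := sum_sqr_shift a N.
have : \sum_(k < N) a k.+1 ^+ 2 <= r * \sum_(k < N) a k ^+ 2 + \sum_(k < N) c k.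
  by rewrite mulr_sumr -big_split; apply: ler_sum => k _; exact: step.
have := mulr_ge0 r_ge0 (sqr_ge0 (a N)); nra.
Qed.

Lemma term_le_sum (R : realFieldType) (N : nat) (g : nat -> R) (k : nat) :
  (k < N)%N -> (forall i, 0 <= g i) -> g k <= \sum_(i < N) g i.
Proof.
move=> kN g_ge0; rewrite (bigD1 (Ordinal kN)) //= lerDl.
by apply: sumr_ge0 => i _.
Qed.

Definition decay_rate (R : realFieldType) (eps : R) : R := `|eps^-1|.

(* Constant bounding the last eigenvector entry in units of tau. *)
Definition edge_const (R : realFieldType) (eps phi : R) : R :=
  (2 + `|eps^-1 - eps| + (1 - decay_rate eps)^-1) / `|phi - eps|.

(* Constant bounding the squared distance to the geometric profile, in units
   of tau^2; it depends on eps and phi only. *)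
Definition profile_const (R : realFieldType) (eps phi : R) : R :=
  (1 - decay_rate eps)^-1 ^+ 3 *
  ((phi - eps^-1) ^+ 2 * edge_const eps phi ^+ 2 + (1 - decay_rate eps)^-1).

Lemma decay_rate_bounds (R : realFieldType) (eps : R) :
  1 < `|eps| -> 0 < decay_rate eps /\ decay_rate eps < 1.
Proof.
move=> eps_gt1; have eps_neq0 : eps != 0 by rewrite -normr_gt0; lra.
rewrite /decay_rate normr_gt0 invr_eq0 eps_neq0 normrV ?unitfE //.
by split=> //; rewrite invf_lt1 //; lra.
Qed.

Section EigenvectorProfile.
Variables (R : realFieldType) (eps phi lam tau : R) (f : nat -> R) (N : nat).
Hypotheses (eps_gt1 : 1 < `|eps|) (phi_neq : phi != eps) (N_gt0 : (0 < N)%N).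
Hypothesis first_row : lam * f 0%N = eps * f 0%N + f 1%N.
Hypothesis inner_rows : forall k, (0 < k < N)%N -> lam * f k = f k.-1 + f k.+1.
Hypothesis last_row : lam * f N = f N.-1 + phi * f N.
Hypothesis unit_f : \sum_(k < N.+1) f k ^+ 2 = 1.
Hypotheses (tau_ge0 : 0 <= tau) (tau_le1 : tau <= 1).
Hypothesis decay_small : decay_rate eps ^+ N <= tau.
Hypothesis lam_close : `|lam - (eps + eps^-1)| <= tau.

Local Notation q := (eps^-1).
Local Notation r := (decay_rate eps).
Local Notation s := (lam - (eps + eps^-1)).
Local Notation u := ((1 - decay_rate eps)^-1).

Let eps_neq0 : eps != 0. Proof. by rewrite -normr_gt0; have := eps_gt1; lra. Qed.
Let r_gt0 : 0 < r. Proof. by case: (decay_rate_bounds eps_gt1). Qed.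
Let r_lt1 : r < 1. Proof. by case: (decay_rate_bounds eps_gt1). Qed.
Let u_gt0 : 0 < u. Proof. by rewrite invr_gt0 subr_gt0. Qed.

Lemma entry_le1 k : (k <= N)%N -> `|f k| <= 1.
Proof.
move=> kN; rewrite -(expr_le1 (n:=2)) // real_normK ?num_real // -unit_f.
by apply: (@term_le_sum _ N.+1 (fun i => f i ^+ 2)) => // i; exact: sqr_ge0.
Qed.

(* Forward differences; they contract with rate r up to an error |s|. *)
Let fdiff k := f k.+1 - eps * f k.

(* fdiff_(k+1) = q fdiff_k + s f_(k+1), and fdiff_0 = (s + q - eps) f_0. *)
Lemma fdiff_bound k : (k < N)%N ->
  `|fdiff k| <= r ^+ k * (tau + `|q - eps|) + tau * u.
Proof.
have step j : (j.+1 < N)%N -> `|fdiff j.+1| <= r * `|fdiff j| + `|s|.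
  move=> jN; have -> : fdiff j.+1 = q * fdiff j + s * f j.+1.
    rewrite /fdiff; have -> : f j.+2 = lam * f j.+1 - f j by rewrite inner_rows //; ring.
    by field.
  apply: le_trans (ler_normD _ _) _; rewrite !normrM lerD2l.
  by rewrite -[leRHS]mulr1 ler_wpM2l // entry_le1 // ltnW // ltnW.
move=> kN; apply: le_trans (geometric_bound (ltW r_gt0) r_lt1 (normr_ge0 s) step kN) _.
apply: lerD; last by rewrite ler_wpM2r // ltW.
apply: ler_wpM2l; first by rewrite exprn_ge0 // ltW.
have -> : fdiff 0%N = (s + (q - eps)) * f 0%N.
  have f1 : f 1%N = (lam - eps) * f 0%N by rewrite mulrBl first_row; ring.
  by rewrite /fdiff f1; field.
rewrite normrM -[leRHS]mulr1; apply: ler_pM; rewrite ?entry_le1 //.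
by apply: le_trans (ler_normD _ _) _; rewrite lerD2r.
Qed.

(* The last row, (phi - eps) f_N = q fdiff_(N-1) + s f_N, makes f_N small. *)
Lemma edge_small : `|f N| <= tau * edge_const eps phi.
Proof.
have phi_eps : 0 < `|phi - eps| by rewrite normr_gt0 subr_eq0.
rewrite /edge_const mulrA ler_pdivlMr //.
have edge : (phi - eps) * f N = q * fdiff N.-1 + s * f N.
  rewrite /fdiff prednK //.
  have -> : f N.-1 = lam * f N - phi * f N by rewrite last_row; ring.
  by field.
have edge_bound : `|f N| * `|phi - eps| <= r * `|fdiff N.-1| + tau.
  rewrite mulrC -normrM edge; apply: le_trans (ler_normD _ _) _.
  rewrite !normrM lerD2l -[leRHS]mulr1 ler_pM ?entry_le1 //.
have fdiff_last := @fdiff_bound N.-1 ltac:(by rewrite ltn_predL).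
have decay_part : r * (r ^+ N.-1 * (tau + `|q - eps|)) <= tau * (1 + `|q - eps|).
  rewrite mulrA -exprS prednK //; apply: ler_pM; rewrite ?lerD2r //.
    by rewrite exprn_ge0 // ltW.
  exact: addr_ge0.
have drift_part : r * (tau * u) <= tau * u.
  by apply: ler_piMl; [rewrite mulr_ge0 // ltW | exact: ltW].
have scaled_last : r * `|fdiff N.-1| <= r * (r ^+ N.-1 * (tau + `|q - eps|) + tau * u).
  by apply: ler_wpM2l; [exact: ltW | exact: fdiff_last].
nra.
Qed.

(* Backward differences, closed at the end by the last row. *)
Let bdiff k := if (k < N)%N then f k.+1 - q * f k else (phi - q) * f N.

(* bdiff_k = q bdiff_(k+1) - q s f_(k+1): a backward contraction. *)
Lemma bdiff_step k : (k < N)%N ->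
  bdiff k ^+ 2 <= r * bdiff k.+1 ^+ 2 + (tau ^+ 2 * u) * f k.+1 ^+ 2.
Proof.
move=> kN.
have -> : bdiff k = q * bdiff k.+1 + - (q * s * f k.+1).
  rewrite /bdiff kN; case: ifP => kN1.
    have -> : f k.+2 = lam * f k.+1 - f k by rewrite inner_rows //; ring.
    by field.
  have eN : k.+1 = N by apply/eqP; rewrite eqn_leq kN leqNgt kN1.
  rewrite eN; have -> : f k = lam * f N - phi * f N by rewrite last_row -eN; ring.
  by field.
apply: le_trans (sqr_contract _ _ _ r_gt0 r_lt1) _ => //.
rewrite lerD2l sqrrN [leRHS]mulrAC; apply: ler_wpM2r; first by rewrite invr_ge0 subr_ge0 ltW.
have q2 : q ^+ 2 <= 1 by rewrite -real_normK ?num_real // expr_le1 // ltW.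
have s2 : s ^+ 2 <= tau ^+ 2 by rewrite -real_normK ?num_real // lerXn2r ?nnegrE.
rewrite !exprMn; apply: ler_wpM2r; first exact: sqr_ge0.
by rewrite -[leRHS]mul1r; apply: ler_pM; rewrite ?sqr_ge0.
Qed.

Lemma bdiff_energy : (1 - r) * \sum_(k < N) bdiff k ^+ 2 <=
  (phi - q) ^+ 2 * (tau * edge_const eps phi) ^+ 2 + tau ^+ 2 * u.
Proof.
apply: le_trans (backward_energy (ltW r_gt0) bdiff_step) _.
apply: lerD.
  have fN : f N ^+ 2 <= (tau * edge_const eps phi) ^+ 2.
    rewrite -real_normK ?num_real // lerXn2r ?nnegrE //; last exact: edge_small.
    exact: le_trans edge_small.
  rewrite /bdiff /= ltnn exprMn; apply: le_trans (_ : (phi - q) ^+ 2 * f N ^+ 2 <= _).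
    by apply: ler_piMl; [rewrite mulr_ge0 ?sqr_ge0 | exact: ltW].
  by apply: ler_wpM2l; [exact: sqr_ge0 | exact: fN].
rewrite -mulr_sumr -[leRHS]mulr1; apply: ler_wpM2l; first exact: mulr_ge0 (sqr_ge0 _) (ltW u_gt0).
by move: unit_f; rewrite big_ord_recl; have := sqr_ge0 (f 0%N); lra.
Qed.

Lemma eigvec_profile :
  \sum_(k < N.+1) (f k - f 0%N * q ^+ k) ^+ 2 <= profile_const eps phi * tau ^+ 2.
Proof.
have r1_gt0 : 0 < 1 - r by rewrite subr_gt0.
pose dev k := f k - f 0%N * q ^+ k.
have dev0 : dev 0%N = 0 by rewrite /dev expr0 mulr1 subrr.
have dev_step k : (k < N)%N -> dev k.+1 ^+ 2 <= r * dev k ^+ 2 + u * bdiff k ^+ 2.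
  move=> kN; have -> : dev k.+1 = q * dev k + bdiff k by rewrite /dev /bdiff kN exprS; ring.
  by rewrite [u * _]mulrC; apply: sqr_contract.
have dev_sum : \sum_(k < N.+1) dev k ^+ 2 = \sum_(k < N) dev k.+1 ^+ 2.
  by rewrite big_ord_recr /= -(sum_sqr_shift dev) dev0 expr0n addr0.
have := forward_energy (ltW r_gt0) dev_step.
rewrite dev0 expr0n mulr0 add0r -mulr_sumr -ler_pdivlMl // => dev_energy.
have := bdiff_energy; rewrite -ler_pdivlMl // => energy.
change (\sum_(k < N.+1) dev k ^+ 2 <= profile_const eps phi * tau ^+ 2).
rewrite dev_sum; apply: le_trans dev_energy _.
have -> : profile_const eps phi * tau ^+ 2 =
    u * (u * (u * ((phi - q) ^+ 2 * (tau * edge_const eps phi) ^+ 2 + tau ^+ 2 * u))).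
  by rewrite /profile_const; ring.
by apply: ler_wpM2l; [exact: ltW | apply: ler_wpM2l; [exact: ltW | exact: energy]].
Qed.

End EigenvectorProfile.

Definition sqnorm (R : realFieldType) (n : nat) (x : 'cV[R]_n) : R :=
  \sum_(i < n) x i 0 ^+ 2.

Definition dot (R : realFieldType) (n : nat) (x y : 'cV[R]_n) : R :=
  \sum_(i < n) x i 0 * y i 0.

Section SquaredNorm.
Variables (R : realFieldType) (n : nat).
Implicit Types (x y v : 'cV[R]_n).

Lemma sqnorm_ge0 x : 0 <= sqnorm x.
Proof. by apply: sumr_ge0 => i _; exact: sqr_ge0. Qed.

Lemma sqnorm_comb (a b : R) x y :
  sqnorm (a *: x + b *: y) = a ^+ 2 * sqnorm x + 2 * a * b * dot x y + b ^+ 2 * sqnorm y.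
Proof.
rewrite /sqnorm /dot !mulr_sumr -!big_split; apply: eq_bigr => i _ /=.
by rewrite !mxE; ring.
Qed.

Lemma sqnorm_sub_line x v (c : R) :
  sqnorm (x - c *: v) = sqnorm x - 2 * c * dot x v + c ^+ 2 * sqnorm v.
Proof. by have := sqnorm_comb 1 (- c) x v; rewrite scale1r scaleNr => ->; ring. Qed.

Lemma dotE x y : (x^T *m y) 0 0 = dot x y.
Proof. by rewrite mxE; apply: eq_bigr => i _; rewrite mxE. Qed.

(* Two orthonormal vectors cannot both be at squared distance d < 1/2 from the
   same line: c2 x - c1 y has squared norm c1^2 + c2^2 but is within 2d times
   that of the line. *)
Lemma orthonormal_off_line x y v (c1 c2 d : R) :
  sqnorm x = 1 -> sqnorm y = 1 -> dot x y = 0 ->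
  sqnorm (x - c1 *: v) <= d -> sqnorm (y - c2 *: v) <= d -> 2 * d < 1 -> False.
Proof.
move=> x1 y1 xy hx hy hd.
set ex := x - c1 *: v; set ey := y - c2 *: v.
have rot : c2 *: x + (- c1) *: y = c2 *: ex + (- c1) *: ey.
  by apply/matrixP => i j; rewrite !mxE; ring.
have lhs := sqnorm_comb c2 (- c1) x y; rewrite x1 y1 xy rot in lhs.
have rhs := sqnorm_comb c2 (- c1) ex ey.
have := sqnorm_ge0 (c2 *: ex + c1 *: ey); rewrite sqnorm_comb => cross.
have ex_d : c2 ^+ 2 * sqnorm ex <= c2 ^+ 2 * d by rewrite ler_wpM2l ?sqr_ge0.
have ey_d : c1 ^+ 2 * sqnorm ey <= c1 ^+ 2 * d by rewrite ler_wpM2l ?sqr_ge0.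
have c1_0 : c1 = 0.
  apply/eqP; rewrite -sqrf_eq0 eq_le sqr_ge0 andbT.
  have := sqr_ge0 c2; have := sqr_ge0 c1; nra.
by move: hx; rewrite /ex c1_0 scale0r subr0 x1; lra.
Qed.

End SquaredNorm.

Lemma norm2_sqr (R : realType) (n : nat) (x : 'cV[R]_n) : norm2 x ^+ 2 = sqnorm x.
Proof. by rewrite /norm2 sqr_sqrtr // sqnorm_ge0. Qed.

Lemma proj_best_approx (R : realType) (n : nat) (x v : 'cV[R]_n) (c : R) :
  0 < sqnorm v -> norm2 (x - projl v x) ^+ 2 <= sqnorm (x - c *: v).
Proof.
move=> v_gt0; rewrite norm2_sqr /projl !dotE.
have -> : dot v v = sqnorm v by apply: eq_bigr => i _; rewrite expr2.
rewrite !sqnorm_sub_line; set b := dot x v / sqnorm v.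
have -> : dot x v = b * sqnorm v by rewrite divfK // gt_eqF.
by have := mulr_ge0 (ltW v_gt0) (sqr_ge0 (c - b)); nra.
Qed.

Section SymmetricEigen.
Variables (R : realFieldType) (n : nat) (T : 'M[R]_n).
Hypothesis T_sym : T^T = T.

Lemma sym_eigvec_row (x : 'cV[R]_n) (mu : R) : T *m x = mu *: x -> x^T *m T = mu *: x^T.
Proof. by move=> Tx; rewrite -{1}T_sym -trmx_mul Tx linearZ. Qed.

Lemma eigenvalue_of_unit_eigvec (x : 'cV[R]_n) (mu : R) :
  T *m x = mu *: x -> sqnorm x = 1 -> eigenvalue T mu.
Proof.
move=> Tx x1; apply/eigenvalueP; exists x^T; first exact: sym_eigvec_row.
rewrite trmx_eq0; apply/eqP => x0; move: x1; rewrite x0 /sqnorm big1 => [/eqP|i _].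
  by rewrite eq_sym oner_eq0.
by rewrite mxE expr0n.
Qed.

Lemma sym_eigvec_orth (x y : 'cV[R]_n) (mu lam : R) :
  T *m x = mu *: x -> T *m y = lam *: y -> lam != mu -> dot x y = 0.
Proof.
move=> Tx Ty lam_mu.
have : lam *: (x^T *m y) = mu *: (x^T *m y).
  by rewrite scalemxAr -Ty mulmxA (sym_eigvec_row Tx) scalemxAl.
move/eqP; rewrite -subr_eq0 -scalerBl scaler_eq0 subr_eq0 (negbTE lam_mu) /=.
by rewrite -dotE => /eqP ->; rewrite mxE.
Qed.

End SymmetricEigen.

Lemma unit_eigvec_of_eigenvalue (R : rcfType) (n : nat) (T : 'M[R]_n) (lam : R) :
  T^T = T -> eigenvalue T lam -> exists y : 'cV[R]_n, T *m y = lam *: y /\ sqnorm y = 1.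
Proof.
move=> T_sym /eigenvalueP [w Tw w_neq0].
have Tw' : T *m w^T = lam *: w^T by rewrite -{1}T_sym -trmx_mul Tw linearZ.
have S_gt0 : 0 < sqnorm w^T.
  rewrite lt_def sqnorm_ge0 andbT; apply: contra w_neq0 => /eqP S0.
  have /psumr_eq0P sq0 := S0; apply/eqP/matrixP => i j; rewrite (ord1 i) mxE.
  by have /eqP := sq0 (fun k _ => sqr_ge0 _) j isT; rewrite mxE sqrf_eq0 => /eqP.
exists ((Num.sqrt (sqnorm w^T))^-1 *: w^T); split.
  by rewrite -scalemxAr Tw' !scalerA mulrC.
rewrite /sqnorm; under eq_bigr do rewrite mxE exprMn.
by rewrite -mulr_sumr exprVn sqr_sqrtr ?ltW // mulVf ?gt_eqF.
Qed.

Definition tdiag (R : realFieldType) (n : nat) (eps phi : R) (i : nat) : R :=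
  if i == 0%N then eps else if i == n.-1 then phi else 0.

Lemma sum_delta (R : realFieldType) (n m : nat) (G : nat -> R) :
  \sum_(j < n) (if (j : nat) == m then G j else 0) = if (m < n)%N then G m else 0.
Proof.
elim: n => [|n IH]; first by rewrite big_ord0.
rewrite big_ord_recr /= IH ltnS.
by case: (ltngtP m n) => h; rewrite ?addr0 ?add0r ?h.
Qed.

Lemma Tmat_sym (R : realType) (n : nat) (eps phi : R) : (Tmat n eps phi)^T = Tmat n eps phi.
Proof.
apply/matrixP => i j; rewrite !mxE.
by case: (eqVneq i j) => [->|_] //; rewrite orbC.
Qed.

Lemma Tmat_entry (R : realType) (n : nat) (eps phi : R) (i j : 'I_n) :
  Tmat n eps phi i j = (if (j : nat) == i then tdiag n eps phi i else 0)
    + (if (j : nat) == i.+1 then 1 else 0)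
    + (if (0 < i)%N && ((j : nat) == i.-1) then 1 else 0).
Proof.
rewrite mxE -val_eqE /= /tdiag; move: (i : nat) (j : nat) => a b.
case: (eqVneq a b) => [<-|ne].
  rewrite ?eqxx (ltn_eqF (ltnSn a)) addr0.
  by case: a => [|a] //=; rewrite ?addr0 // (gtn_eqF (ltnSn a)) /= ?addr0.
rewrite add0r; case: a ne => [|a] ne /=.
  by rewrite orbF addr0 eq_sym.
rewrite eqSS (eq_sym a.+2 b).
case: (eqVneq b a.+2) => [->|n2] /=.
  by rewrite (gtn_eqF (leqnSn a.+1)) addr0.
by rewrite add0r; case: (b == a).
Qed.

Lemma Tmat_mul_row (R : realType) (n : nat) (eps phi : R) (x : 'cV[R]_n) (f : nat -> R)
    (i : 'I_n) : (forall j : 'I_n, x j 0 = f j) ->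
  (Tmat n eps phi *m x) i 0 = tdiag n eps phi i * f i
     + (if (i.+1 < n)%N then f i.+1 else 0) + (if (0 < i)%N then f i.-1 else 0).
Proof.
have ifmul (b : bool) (a y : R) : (if b then a else 0) * y = if b then a * y else 0.
  by case: b; rewrite ?mul0r.
move=> xf; rewrite mxE.
under eq_bigr do rewrite Tmat_entry xf !mulrDl !ifmul !mul1r.
rewrite !big_split /= !sum_delta (@sum_delta _ n i (fun j => tdiag n eps phi i * f j)) ltn_ord.
case: (0 < i)%N => /=; last by rewrite big1.
by rewrite sum_delta (leq_ltn_trans (leq_pred _) (ltn_ord i)).
Qed.

Lemma eigvec_near_line (R : realType) (eps phi lam tau : R) (n : nat) (y : 'cV[R]_n) :
  1 < `|eps| -> phi != eps -> (2 <= n)%N ->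
  Tmat n eps phi *m y = lam *: y -> sqnorm y = 1 ->
  0 <= tau -> tau <= 1 -> decay_rate eps ^+ n.-1 <= tau ->
  `|lam - (eps + eps^-1)| <= tau ->
  exists c : R, sqnorm (y - c *: vvec n eps) <= profile_const eps phi * tau ^+ 2.
Proof.
case: n y => [|N] // y eps_gt1 phi_neq N_gt0 Ty y1 tau_ge0 tau_le1 decay_small lam_close.
rewrite ltnS in N_gt0.
pose f k := y (inord k) 0.
have yf (j : 'I_N.+1) : y j 0 = f j by rewrite /f inord_val.
have row k : (k <= N)%N -> lam * f k = tdiag N.+1 eps phi k * f k
     + (if (k.+1 < N.+1)%N then f k.+1 else 0) + (if (0 < k)%N then f k.-1 else 0).
  move=> kN; have := Tmat_mul_row eps phi (inord k) yf.
  by rewrite Ty mxE inordK ?ltnS.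
exists (f 0%N).
have -> : sqnorm (y - f 0%N *: vvec N.+1 eps) =
          \sum_(k < N.+1) (f k - f 0%N * eps^-1 ^+ k) ^+ 2.
  by apply: eq_bigr => k _; rewrite !mxE yf exprVn.
apply: (@eigvec_profile _ eps phi lam) => //.
- by rewrite row // /tdiag /= ltnS N_gt0 addr0.
- move=> k /andP [k_gt0 kN]; rewrite row ?(ltnW kN) // /tdiag /=.
  by rewrite (gtn_eqF k_gt0) (ltn_eqF kN) ltnS kN k_gt0 mul0r add0r addrC.
- by rewrite row // /tdiag /= (gtn_eqF N_gt0) eqxx ltnn N_gt0 addr0 addrC.
- by rewrite -y1; apply: eq_bigr => k _; rewrite yf.
Qed.

Lemma limit_outside_bulk (R : realFieldType) (eps : R) : 1 < `|eps| -> 2 < `|eps + eps^-1|.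
Proof.
move=> eps_gt1; have [r_gt0 r_lt1] := decay_rate_bounds eps_gt1.
have eps_neq0 : eps != 0 by rewrite -normr_gt0; lra.
have eps_inv : eps * eps^-1 = 1 by rewrite mulfV.
have gap : 0 < (eps - eps^-1) ^+ 2.
  rewrite lt_def sqr_ge0 sqrf_eq0 subr_eq0 andbT; apply/eqP => e.
  by move: r_lt1; rewrite /decay_rate -e; lra.
have : 4 < `|eps + eps^-1| ^+ 2.
  rewrite real_normK ?num_real //.
  have -> : (eps + eps^-1) ^+ 2 = (eps - eps^-1) ^+ 2 + 4 * (eps * eps^-1) by ring.
  by rewrite eps_inv; lra.
by have := normr_ge0 (eps + eps^-1); nra.
Qed.

Lemma small_scale (R : realFieldType) (K e : R) : 0 < e ->
  exists2 tau : R, 0 < tau /\ tau <= 1 & K * tau ^+ 2 <= e ^+ 2.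
Proof.
move=> e_gt0; have K1 : 0 < `|K| + 1 by rewrite ltr_pwDr.
pose tau := Num.min 1 (e / (`|K| + 1)).
have tau_gt0 : 0 < tau by rewrite lt_min ltr01 divr_gt0.
have tau_e : (`|K| + 1) * tau <= e by rewrite mulrC -ler_pdivlMr // ge_min lexx orbT.
exists tau; first by split=> //; rewrite ge_min lexx.
have tau_sq : ((`|K| + 1) * tau) ^+ 2 <= e ^+ 2.
  by rewrite lerXn2r // nnegrE ltW // mulr_gt0.
apply: le_trans tau_sq; rewrite exprMn; apply: ler_wpM2r; first exact: sqr_ge0.
by apply: le_trans (ler_norm K) _; have := normr_ge0 K; nra.
Qed.

Lemma eventually_pow_le (R : realType) (r tau : R) : 0 < r -> r < 1 -> 0 < tau ->
  \forall n \near \oo, r ^+ n.-1 <= tau.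
Proof.
move=> r_gt0 r_lt1 tau_gt0.
have r_norm : `|r| < 1 by rewrite ger0_norm // ltW.
have /cvgr_dist_le /(_ _ (mulr_gt0 tau_gt0 r_gt0)) pow_small := cvg_expr r_norm.
near=> n.
have n_gt0 : (0 < n)%N by near: n; exact: nbhs_infty_gt.
have : `|0 - r ^+ n| <= tau * r by near: n; exact: pow_small.
have -> : r ^+ n = r ^+ n.-1 * r by rewrite -exprSr prednK.
rewrite sub0r normrN ger0_norm; first by rewrite ler_pM2r.
by rewrite mulr_ge0 ?exprn_ge0 // ltW.
Unshelve. all: by end_near.
Qed.

Lemma sqnorm_vvec_gt0 (R : realType) (n : nat) (eps : R) :
  (0 < n)%N -> 0 < sqnorm (vvec n eps).
Proof.
move=> n_gt0; apply: lt_le_trans ltr01 _.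
have := @term_le_sum _ n (fun k => (eps^-1 ^+ k) ^+ 2) 0%N n_gt0 (fun k => sqr_ge0 _).
rewrite expr0 expr1n => /le_trans; apply; rewrite le_eqVlt; apply/orP; left.
by apply/eqP/eq_bigr => i _; rewrite mxE exprVn.
Qed.

Section Outliers.
Variables (R : realType) (eps phi : R) (mu : nat -> R) (x : forall n : nat, 'cV[R]_n).
Hypotheses (eps_gt1 : 1 < `|eps|) (phi_neq : phi != eps).
Hypothesis eigpair : forall n, (2 <= n)%N ->
  Tmat n eps phi *m x n = mu n *: x n /\ sqnorm (x n) = 1.
Hypothesis mu_lim : mu @ \oo --> eps + eps^-1.

Local Notation th := (eps + eps^-1).
Local Notation K := (profile_const eps phi).

Lemma eventually_close (tau : R) : 0 < tau ->
  \forall n \near \oo, [/\ (2 <= n)%N, decay_rate eps ^+ n.-1 <= tau & `|mu n - th| <= tau].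
Proof.
move=> tau_gt0; have [r_gt0 r_lt1] := decay_rate_bounds eps_gt1.
have /cvgr_dist_le /(_ _ tau_gt0) mu_near := mu_lim.
have pow_small := eventually_pow_le r_gt0 r_lt1 tau_gt0.
near=> n; split.
- by near: n; exact: nbhs_infty_ge.
- by near: n.
- by rewrite distrC; near: n.
Unshelve. all: by end_near.
Qed.

Lemma mu_outlier : \forall n \near \oo, outlier (Tmat n eps phi) (mu n).
Proof.
have th_gt2 := limit_outside_bulk eps_gt1.
have margin_gt0 : 0 < (`|th| - 2) / 2 by rewrite divr_gt0 // subr_gt0.
apply: filterS (eventually_close margin_gt0) => n [n_ge2 _ mu_close].
have [Tx x1] := eigpair n_ge2.
split; first exact: (eigenvalue_of_unit_eigvec (Tmat_sym n eps phi) Tx x1).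
have margin : (`|th| - 2) / 2 * 2 = `|th| - 2 by rewrite divfK.
have := ler_normD (mu n) (th - mu n); rewrite addrC subrK distrC.
by move: mu_close; rewrite distrC; lra.
Qed.

(* Part 1b: a second eigenvalue near the limit would give a second unit
   eigenvector orthogonal to x_n and close to the line of v_n. *)
Lemma spectral_gap : exists2 c : R, 0 < c &
  \forall n \near \oo, forall lam : R,
    eigenvalue (Tmat n eps phi) lam -> lam != mu n -> c <= `|lam - th|.
Proof.
have half_gt0 : 0 < 2^-1 :> R by rewrite invr_gt0.
have [tau [tau_gt0 tau_le1] small] := small_scale K half_gt0.
exists tau => //; apply: filterS (eventually_close tau_gt0).
move=> n [n_ge2 decay mu_close] lam eig_lam lam_neq; rewrite leNgt; apply/negP => lam_close.
have [Tx x1] := eigpair n_ge2.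
have [y [Ty y1]] := unit_eigvec_of_eigenvalue (Tmat_sym n eps phi) eig_lam.
have [c1 x_near] := eigvec_near_line eps_gt1 phi_neq n_ge2 Tx x1 (ltW tau_gt0) tau_le1
  decay mu_close.
have [c2 y_near] := eigvec_near_line eps_gt1 phi_neq n_ge2 Ty y1 (ltW tau_gt0) tau_le1
  decay (ltW lam_close).
apply: (orthonormal_off_line x1 y1 (sym_eigvec_orth (Tmat_sym n eps phi) Tx Ty lam_neq)
  x_near y_near).
by move: small; rewrite expr2; lra.
Qed.

Lemma eigvec_aligned : (fun n => norm2 (x n - projl (vvec n eps) (x n))) @ \oo --> 0.
Proof.
apply/cvgrPdist_le => e e_gt0.
have [tau [tau_gt0 tau_le1] small] := small_scale K e_gt0.
apply: filterS (eventually_close tau_gt0) => n [n_ge2 decay mu_close].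
have [Tx x1] := eigpair n_ge2.
have [c x_near] := eigvec_near_line eps_gt1 phi_neq n_ge2 Tx x1 (ltW tau_gt0) tau_le1
  decay mu_close.
have v_gt0 := sqnorm_vvec_gt0 eps (ltnW n_ge2).
rewrite sub0r normrN ger0_norm ?sqrtr_ge0 // -ler_sqr ?nnegrE ?sqrtr_ge0 ?(ltW e_gt0) //.
by apply: le_trans (proj_best_approx _ c v_gt0) _; apply: le_trans x_near small.
Qed.

End Outliers.

Unset Implicit Arguments.

Theorem theorem3p2 (R : realType) (eps phi : R)
  (mu : nat -> R) (x : forall n : nat, 'cV[R]_n) :
  1 < `|eps| -> phi != eps ->
  (forall n : nat, (2 <= n)%N ->
     Tmat n eps phi *m x n = mu n *: x n /\ norm2 (x n) = 1) ->
  mu @ \oo --> eps + eps^-1 ->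
  ((\forall n \near \oo, outlier (Tmat n eps phi) (mu n)) /\
   exists2 c : R, 0 < c &
     \forall n \near \oo, forall lam : R,
       eigenvalue (Tmat n eps phi) lam -> lam != mu n ->
       c <= `|lam - (eps + eps^-1)|) /\
  (fun n => norm2 (x n - projl (vvec n eps) (x n))) @ \oo --> 0.
Proof.
move=> eps_gt1 phi_neq eigpair mu_lim.
have unit_eigpair n : (2 <= n)%N ->
    Tmat n eps phi *m x n = mu n *: x n /\ sqnorm (x n) = 1.
  by move=> /eigpair [Tx x1]; rewrite -norm2_sqr x1 expr1n.
split; [split|].
- exact: mu_outlier eps_gt1 unit_eigpair mu_lim.
- exact: spectral_gap eps_gt1 phi_neq unit_eigpair mu_lim.
- exact: eigvec_aligned eps_gt1 phi_neq unit_eigpair mu_lim.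
Qed.
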